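(* Let $(E,\mathcal{E},\nu)$ be a $\sigma$-finite measure space in which every singleton set is measurable with positive measure, $\phi$ a Young function satisfying the $\Delta_2$-condition, $w$ a weight function, and $\Psi:E\to E$ a non-singular measurable transformation such that the composition operator $C_\Psi f=f\circ\Psi$ is a bounded linear operator on the Orlicz-Lorentz space $L_{(\phi,w)}$. Let $m\ge0$ be an integer. If the map $\Psi|_{\Psi^m(E)}:\Psi^m(E)\to\Psi^m(E)$ is not injective, then $\mathcal{D}(C_\Psi)>m$.
   Context: A Young function is a convex $\phi:[0,\infty)\to[0,\infty)$ with $\phi(x)=0\iff x=0$ and $\lim_{x\to\infty}\phi(x)=\infty$; $\Delta_2$-condition: $\phi(2x)\le k\phi(x)$ for some $k>0$ and all $x>0$. A weight function is a non-increasing locally integrable $w:(0,\infty)\to(0,\infty)$ with $\int_0^\infty w=\infty$. For measurable $f$, $\nu_f(s)=\nu\{|f|>s\}$, $f^*(t)=\inf\{s>0:\nu_f(s)\le t\}$; $L_{(\phi,w)}$ is the space of measurable $f:E\to\mathbb{C}$ with $\int_0^\infty\phi(\alpha f^*(t))w(t)\,dt<\infty$ for some $\alpha>0$, with the Luxemburg norm. $\Psi$ non-singular: $\nu(\Psi^{-1}(S))=0$ whenever $\nu(S)=0$; $\Psi^0=\mathrm{id}$. The descent $\mathcal{D}(T)$ is the smallest integer $m$ with $\mathcal{R}(T^{m+1})=\mathcal{R}(T^m)$ ($\mathcal{R}$ = range), and $\infty$ if no such $m$ exists. *)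

From HB Require Import structures.
From mathcomp Require Import all_boot all_order all_algebra.
From mathcomp Require Import all_classical all_reals all_analysis.
From mathcomp Require complex.

Set Implicit Arguments.
Unset Strict Implicit.
Unset Printing Implicit Defensive.

Import Order.TTheory GRing.Theory Num.Theory.
Local Open Scope classical_set_scope.
Local Open Scope ring_scope.

Section OrliczLorentz.
Variable R : realType.

Definition C := complex.complex R.
Definition cabs (z : C) : R :=
  Num.sqrt (complex.Re z ^+ 2 + complex.Im z ^+ 2).
Definition cscale (a : R) (z : C) : C :=
  complex.Complex (a * complex.Re z) (a * complex.Im z).

(* Young function  phi : [0,oo) -> [0,oo)  (values on negatives irrelevant) *)
Definition young_function (phi : R -> R) : Prop :=
  [/\ (forall x, 0 <= x -> 0 <= phi x),
      (forall x y t, 0 <= x -> 0 <= y -> 0 <= t -> t <= 1 ->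
          phi (t * x + (1 - t) * y) <= t * phi x + (1 - t) * phi y),
      (forall x, 0 <= x -> (phi x = 0 <-> x = 0)) &
      (phi x @[x --> +oo] --> +oo)].

Definition delta2 (phi : R -> R) : Prop :=
  exists k : R, 0 < k /\ forall x, 0 < x -> phi (2 * x) <= k * phi x.

Definition weight_function (w : R -> R) : Prop :=
  [/\ (forall t, 0 < t -> 0 < w t),
      (forall s t, 0 < s -> s <= t -> w t <= w s),
      (forall t, 0 < t ->
         (\int[lebesgue_measure]_(x in `]0%R, t%R]) (w x)%:E < +oo)%E) &
      (\int[lebesgue_measure]_(x in `]0%R, +oo[) (w x)%:E = +oo)%E].

Context d (E : measurableType d) (nu : {measure set E -> \bar R}).

(* measurability of a complex-valued function (Borel sigma-algebra of C = R^2) *)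
Definition cmeasurable (f : E -> C) : Prop :=
  measurable_fun setT (fun x => complex.Re (f x)) /\
  measurable_fun setT (fun x => complex.Im (f x)).

Definition distrib (f : E -> C) (s : R) : \bar R :=
  nu [set x | s < cabs (f x)].

Definition rearr (f : E -> C) (t : R) : \bar R :=
  ereal_inf [set s%:E | s in [set s : R | 0 < s /\ (distrib f s <= t%:E)%E]].

Definition phiE (phi : R -> R) (x : \bar R) : \bar R :=
  match x with
  | r%:E => (phi r)%:E
  | _ => +oo%E
  end.

Definition modular (phi w : R -> R) (f : E -> C) : \bar R :=
  (\int[lebesgue_measure]_(t in `]0%R, +oo[) (phiE phi (rearr f t) * (w t)%:E))%E.

Definition OL (phi w : R -> R) : set (E -> C) :=
  [set f | cmeasurable f /\
     exists alpha : R, 0 < alpha /\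
       (modular phi w (fun x => cscale alpha (f x)) < +oo)%E].

Definition lux_norm (phi w : R -> R) (f : E -> C) : \bar R :=
  ereal_inf [set lam%:E | lam in [set lam : R | 0 < lam /\
     (modular phi w (fun x => cscale lam^-1 (f x)) <= 1)%E]].

Definition nonsingular (Psi : E -> E) : Prop :=
  forall S, measurable S -> nu S = 0%E -> nu (Psi @^-1` S) = 0%E.

Definition comp_op (Psi : E -> E) (f : E -> C) : E -> C := f \o Psi.

Definition bounded_comp_op (phi w : R -> R) (Psi : E -> E) : Prop :=
  (forall f, OL phi w f -> OL phi w (comp_op Psi f)) /\
  exists M : R, 0 <= M /\ forall f, OL phi w f ->
    (lux_norm phi w (comp_op Psi f) <= M%:E * lux_norm phi w f)%E.

Definition range_pow (phi w : R -> R) (Psi : E -> E) (k : nat) : set (E -> C) :=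
  [set iter k (comp_op Psi) f | f in OL phi w].

(* D(C_Psi) > m : no k <= m with R(T^{k+1}) = R(T^k) *)
Definition descent_gt (phi w : R -> R) (Psi : E -> E) (m : nat) : Prop :=
  ~ (exists k : nat, (k <= m)%N /\
       range_pow phi w Psi k.+1 = range_pow phi w Psi k).

End OrliczLorentz.

From Pilot Require Import Defs.
From HB Require Import structures.
From mathcomp Require Import all_boot all_order all_algebra.
From mathcomp Require Import all_classical all_reals all_analysis.
From mathcomp Require complex.
From mathcomp Require Import measurable_realfun.

Set Implicit Arguments.
Unset Strict Implicit.
Unset Printing Implicit Defensive.

Import Order.TTheory GRing.Theory Num.Theory.
Local Open Scope classical_set_scope.
Local Open Scope ring_scope.

(* If R(C^(k+1)) = R(C^k) for some k <= m, every f in L_(phi,w) factors as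
   f o Psi^k = h o Psi^(k+1); as Psi^m(E) lies in the image of Psi^k, f takes
   equal values at points of Psi^m(E) identified by Psi.  Singletons are atoms
   of finite positive measure, so the indicator of {a} lies in L_(phi,w): its
   rearrangement is bounded and vanishes beyond nu{a}.  It separates a from
   every b <> a, hence Psi is injective on Psi^m(E). *)

(* The integral of a non-measurable function is the supremum over the simple
   functions below it, which is monotone without any measurability. *)
Lemma ge0_le_integral_nonmeasurable d (T : measurableType d) (R : realType)
    (mu : {measure set T -> \bar R}) (D : set T) (f g : T -> \bar R) :
  (forall x, D x -> (0 <= f x)%E) -> (forall x, D x -> (0 <= g x)%E) ->
  (forall x, D x -> (f x <= g x)%E) ->
  (\int[mu]_(x in D) f x <= \int[mu]_(x in D) g x)%E.
Proof.
move=> f0 g0 fg; rewrite !ge0_integralE//.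
apply: ge_ereal_sup => _ [h /= hf <-]; apply: ereal_sup_ubound; exists h => //= x.
by apply: le_trans (hf x) _; rewrite /patch; case: ifP => // /[1!inE] /fg.
Qed.

Lemma sigma_finite_set1_lty d (T : measurableType d) (R : realType)
    (mu : {measure set T -> \bar R}) (a : T) :
  sigma_finite setT mu -> measurable [set a] -> (mu [set a] < +oo)%E.
Proof.
case=> F FT HF ma; have : (setT : set T) a by [].
rewrite FT => -[i _ Fia]; have [mFi muFi] := HF i.
apply: le_lt_trans muFi; apply: le_measure; rewrite ?inE //.
by move=> x ->.
Qed.

Section YoungFunction.
Variables (R : realType) (phi : R -> R).
Hypothesis hphi : young_function phi.

Lemma young_function0 : phi 0 = 0.
Proof. by case: hphi => _ _ phiz _; apply/(phiz 0). Qed.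

Lemma young_function_le_scale x t : 0 <= x -> 0 <= t <= 1 ->
  phi (t * x) <= t * phi x.
Proof.
move=> x0 /andP[t0 t1]; case: hphi => _ phiconv _ _.
have := phiconv x 0 t x0 (lexx 0) t0 t1.
by rewrite mulr0 addr0 young_function0 mulr0 addr0.
Qed.

End YoungFunction.

Section Rearrangement.
Context (R : realType) d (E : measurableType d) (nu : {measure set E -> \bar R}).
Implicit Types (f : E -> C R) (s t : R).

Lemma rearr_ge0 f t : (0 <= rearr nu f t)%E.
Proof.
by apply: le_ereal_inf_tmp => _ [s [s0 _] <-]; rewrite lee_fin ltW.
Qed.

Lemma rearr_le f s t : 0 < s -> (distrib nu f s <= t%:E)%E ->
  (rearr nu f t <= s%:E)%E.
Proof.
by move=> s0 fst; apply: ge_ereal_inf; exists s%:E; [exists s | exact: lexx].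
Qed.

Lemma rearr_eq0 f t : (forall s, 0 < s -> (distrib nu f s <= t%:E)%E) ->
  rearr nu f t = 0%E.
Proof.
move=> fst; apply/eqP; rewrite eq_le rearr_ge0 andbT.
by apply/lee_addgt0Pr => s s0; rewrite add0e; exact: rearr_le s0 (fst s s0).
Qed.

Lemma modular_lty phi w f c : young_function phi -> weight_function w ->
  0 < c ->
  (forall t, 0 < t -> (phiE phi (rearr nu f t) <= 1)%E) ->
  (forall t, c < t -> rearr nu f t = 0%E) ->
  (modular nu phi w f < +oo)%E.
Proof.
move=> hphi [w0 _ wint _] c0 phif1 f0.
have phiE0 t : (0 <= phiE phi (rearr nu f t))%E.
  have := rearr_ge0 f t; case: (rearr nu f t) => //= r.
  by rewrite !lee_fin; case: hphi => phi0 _ _ _; exact: phi0.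
apply: (@le_lt_trans _ _ (\int[lebesgue_measure]_(t in `]0%R, +oo[)
    (((fun t => (w t)%:E) \_ `]0%R, c]) t))%E); last first.
  rewrite -integral_mkcondr setIidr; first exact: wint.
  by move=> x /=; rewrite !in_itv /= => /andP[->].
apply: ge0_le_integral_nonmeasurable => t; rewrite /= in_itv /= andbT => t0.
- by rewrite mule_ge0 // lee_fin ltW // w0.
- by rewrite /patch; case: ifP => // _; rewrite lee_fin ltW // w0.
rewrite /patch; case: (leP t c) => tc.
  rewrite mem_set; last by rewrite /= in_itv /= t0 tc.
  apply: gee_pMl; [|by rewrite lee_fin ltW ?w0 | exact: phif1].
  by rewrite ge0_fin_numE // (le_lt_trans (phif1 t t0)) ?ltey.
rewrite memNset; last by rewrite /= in_itv /= leNgt tc andbF.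
by rewrite f0 //= (young_function0 hphi) mul0e.
Qed.

End Rearrangement.

Section PointIndicator.
Context (R : realType) d (E : measurableType d) (nu : {measure set E -> \bar R}).

Definition indic_pt (a : E) : E -> C R := fun x => complex.Complex (\1_[set a] x) 0.

Lemma cabs_cscale_indic_pt alpha a x : 0 <= alpha ->
  cabs (Defs.cscale alpha (indic_pt a x)) = alpha * \1_[set a] x.
Proof.
move=> alpha0; rewrite /cabs /Defs.cscale /= mulr0 expr0n /= addr0 sqrtr_sqr.
by rewrite ger0_norm // mulr_ge0 // indicE.
Qed.

Lemma distrib_cscale_indic_pt alpha a s : 0 <= alpha -> 0 <= s ->
  distrib nu (fun x => Defs.cscale alpha (indic_pt a x)) s =
  if s < alpha then nu [set a] else 0%E.
Proof.
move=> alpha0 s0; rewrite /distrib.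
suff -> : [set x | s < cabs (Defs.cscale alpha (indic_pt a x))] =
          if s < alpha then [set a] else set0 by case: ifP; rewrite ?measure0.
apply/seteqP; split => x /=; rewrite cabs_cscale_indic_pt // indicE.
  have [->|nxa] := pselect (x = a); first by rewrite mem_set // mulr1 => ->.
  by rewrite memNset // mulr0 => /(le_lt_trans s0); rewrite ltxx.
by case: ifP => [sa ->|//]; rewrite mem_set // mulr1.
Qed.

Lemma indic_pt_OL phi w a : sigma_finite setT nu ->
  measurable [set a] -> (0 < nu [set a])%E ->
  young_function phi -> weight_function w -> OL nu phi w (indic_pt a).
Proof.
move=> hsf ma nua hphi hw; split.
  by split; [exact: measurable_indic | exact: measurable_cst].
have phi1 : 0 <= phi 1 by case: hphi => phi0 _ _ _; exact: phi0.
set alpha := (1 + phi 1)^-1.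
have alpha0 : 0 < alpha by rewrite invr_gt0 ltr_pwDl.
have alpha1 : alpha <= 1 by rewrite invf_le1 ?lerDl // ltr_pwDl.
have phi_le1 r : 0 <= r <= alpha -> phi r <= 1.
  move=> /andP[r0 ra]; rewrite -[r]mulr1.
  apply: le_trans (young_function_le_scale hphi ler01 _) _.
    by rewrite r0 (le_trans ra).
  rewrite (le_trans (ler_wpM2r phi1 ra)) // mulrC ler_pdivrMr ?ltr_pwDl //.
  by rewrite mul1r lerDr.
set c := fine (nu [set a]).
have cE : nu [set a] = c%:E.
  by rewrite fineK // ge0_fin_numE ?ltW // sigma_finite_set1_lty.
have c0 : 0 < c by rewrite -lte_fin -cE.
exists alpha; split => //.
set g := fun x => Defs.cscale alpha (indic_pt a x).
apply: (modular_lty hphi hw c0) => t t0.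
- have ra : (rearr nu g t <= alpha%:E)%E.
    apply: (rearr_le alpha0).
    by rewrite /g distrib_cscale_indic_pt ?ltxx /= ?lee_fin ltW.
  have r0 := rearr_ge0 nu g t.
  have rfin : rearr nu g t = (fine (rearr nu g t))%:E.
    by rewrite fineK // ge0_fin_numE // (le_lt_trans ra) ?ltry.
  by rewrite rfin /= lee_fin phi_le1 // -!lee_fin -rfin r0 ra.
- apply: rearr_eq0 => s s0.
  rewrite /g (distrib_cscale_indic_pt _ (ltW alpha0) (ltW s0)).
  by case: ifP => _; rewrite ?cE lee_fin ltW // (lt_trans c0 t0).
Qed.

End PointIndicator.

Section Descent.
Context (R : realType) d (E : measurableType d) (nu : {measure set E -> \bar R}).
Variables (phi w : R -> R) (Psi : E -> E).

Lemma iter_comp_op n (f : E -> C R) x :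
  iter n (comp_op Psi) f x = f (iter n Psi x).
Proof. by elim: n x => // n IH x; rewrite iterS /comp_op /= IH -iterSr. Qed.

Lemma range_pow_eq_fibre_const k m (f : E -> C R) : (k <= m)%N ->
  range_pow nu phi w Psi k.+1 = range_pow nu phi w Psi k -> OL nu phi w f ->
  {in range (iter m Psi) &, forall a b, Psi a = Psi b -> f a = f b}.
Proof.
move=> km hk Lf a b; rewrite !inE => -[a0 _ <-] [b0 _ <-] hab.
have : range_pow nu phi w Psi k (iter k (comp_op Psi) f) by exists f.
rewrite -hk => -[h _ hf].
have iter_mk z : iter m Psi z = iter k Psi (iter (m - k) Psi z).
  by rewrite -iterD subnKC.
have fE z : f (iter m Psi z) = h (Psi (iter m Psi z)).
  have := congr1 (fun F => F (iter (m - k) Psi z)) hf; rewrite [LHS]iter_comp_op.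
  by rewrite iter_comp_op iterS -iter_mk => <-.
by rewrite !fE hab.
Qed.

End Descent.

Theorem corollary4p4 (R : realType) (d : measure_display) (E : measurableType d)
  (nu : {measure set E -> \bar R})
  (hsf : sigma_finite setT nu)
  (hsing : forall x : E, measurable [set x] /\ (0 < nu [set x])%E)
  (phi w : R -> R) (hphi : young_function phi) (hd2 : delta2 phi)
  (hw : weight_function w)
  (Psi : E -> E) (hPsi_meas : measurable_fun setT Psi)
  (hPsi_ns : nonsingular nu Psi)
  (hbdd : bounded_comp_op nu phi w Psi)
  (m : nat)
  (hninj : ~ {in range (iter m Psi) &, injective Psi}) :
  descent_gt nu phi w Psi m.
Proof.
move=> [k [km hk]]; apply: hninj => a b ha hb hab.
have [ma nua] := hsing a.
have := range_pow_eq_fibre_const km hk (indic_pt_OL hsf ma nua hphi hw) ha hb hab.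
rewrite /indic_pt !indicE mem_set // => -[].
by have [//|nba] := pselect (b = a); rewrite memNset // => /eqP; rewrite eqr_nat.
Qed.
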